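(* Consider a fair allocation instance with agents $a_1,\dots,a_n$, a set $M$ of $m$ goods, binary XOS valuations $v_i$ accessed through a value oracle answering $v_i(S)$ in $O(1)$ time, and entitlements $b_i>0$. Consider the following algorithm. Initialize $s_i=\lfloor b_i m\rfloor$ for all $i$. Repeat: sort the agents so that $\frac{\lceil s_1/2\rceil}{b_1}\le\cdots\le\frac{\lceil s_n/2\rceil}{b_n}$; set $R\gets M$; for $i=1,\dots,n$ in this order, if $v_i(R)\ge\lceil s_i/2\rceil$ then give $a_i$ a bundle $A_i\subseteq R$ with $v_i(A_i)=|A_i|=\lceil s_i/2\rceil$ (computed by extracting a non-wasteful subset, which can be done in $O(m)$ time) and set $R\gets R\setminus A_i$; otherwise set $s_i\gets s_i-1$ and start the next repetition. If all $n$ agents received bundles, allocate $R$ arbitrarily and return the allocation. This algorithm runs in time $O(mn(m+\log n))$.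
   Context: A valuation $v:2^M\to\mathbb{R}_{\ge0}$ is XOS if there is a finite collection of additive functions $\{\ell_t\}_t$ with nonnegative item values such that $v(S)=\max_t\ell_t(S)$. It has binary marginals if $v(\varnothing)=0$ and $v(S\cup\{g\})-v(S)\in\{0,1\}$ for all $S,g$; ''binary XOS'' means XOS with binary marginals. A set $S$ is non-wasteful for $v$ if $v(S)=|S|$. For a binary XOS $v$ and any set $T$, a non-wasteful subset $X\subseteq T$ with $|X|=k$ for any given $k\le v(T)$ can be computed in $O(m)$ time (this is taken as a primitive in the running-time accounting). *)

From mathcomp Require Import all_boot all_order all_algebra.
Set Implicit Arguments. Unset Strict Implicit. Unset Printing Implicit Defensive.
Import Order.TTheory GRing.Theory Num.Theory.
Local Open Scope ring_scope.

(* Valuations: agents are 'I_n, goods are 'I_m (M = [set: 'I_m]).       *)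
(* A valuation with binary marginals takes values in nat (v(empty)=0 and *)
(* all marginals are 0/1), so valuations are typed {set 'I_m} -> nat.   *)

Definition binary_marginals (m : nat) (v : {set 'I_m} -> nat) : Prop :=
  v set0 = 0%N /\
  forall (S : {set 'I_m}) (g : 'I_m),
    v (g |: S) = v S \/ v (g |: S) = (v S).+1.

Definition XOS (R : realDomainType) (m : nat) (v : {set 'I_m} -> nat) : Prop :=
  exists L : seq {ffun 'I_m -> R},
    L != [::] /\
    (forall l, l \in L -> forall g, 0 <= l g) /\
    forall S : {set 'I_m},
      (v S)%:R = \big[Num.max/0]_(l <- L) \sum_(g in S) l g.

Definition binary_XOS (R : realDomainType) (m : nat) (v : {set 'I_m} -> nat) :=
  XOS R v /\ binary_marginals v.

(* The algorithm, with an explicit cost model.                          *)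
(*  - a value-oracle query v_i(S) costs 1;                              *)
(*  - extracting a non-wasteful subset of size k of a set costs m;      *)
(*  - any elementary set operation on subsets of M (R <- M, R <- R\A_i, *)
(*    giving the rest of R away) costs m;                               *)
(*  - computing the n keys / n initial values s_i costs n;              *)
(*  - sorting n keys costs n * (floor(log2 n) + 1) (comparison sort).   *)
(* Nondeterministic choices (tie-breaking in the sort, which            *)
(* non-wasteful subset is extracted) are resolved by arbitrary policies *)
(* [order] and [pick], which are universally quantified in the theorem. *)

Definition sort_cost (n : nat) : nat := (n * (trunc_log 2 n).+1)%N.

Section Algorithm.
Variables (R : archiRealFieldType) (n m : nat).
Variable v : 'I_n -> {set 'I_m} -> nat.
Variable b : 'I_n -> R.

Definition s_init : {ffun 'I_n -> nat} := [ffun i => `|Num.floor (b i * m%:R)|%N].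

(* sorting key  ceil(s_i/2) / b_i  (uphalf s = ceil(s/2)) *)
Definition key (s : {ffun 'I_n -> nat}) (i : 'I_n) : R := (uphalf (s i))%:R / b i.

Definition valid_order (order : {ffun 'I_n -> nat} -> seq 'I_n) : Prop :=
  forall s, perm_eq (order s) (enum 'I_n) /\
            sorted (fun i j => key s i <= key s j) (order s).

Definition valid_pick (pick : 'I_n -> {set 'I_m} -> nat -> {set 'I_m}) : Prop :=
  forall i T k, (k <= v i T)%N ->
    [/\ pick i T k \subset T, #|pick i T k| = k & v i (pick i T k) = k].

Variable order : {ffun 'I_n -> nat} -> seq 'I_n.
Variable pick : 'I_n -> {set 'I_m} -> nat -> {set 'I_m}.

(* Result: inl (i, cost) if agent i failed (then s_i is decremented and a new
   repetition starts); inr (A, R, cost) if every agent received a bundle. *)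
Fixpoint pass (s : {ffun 'I_n -> nat}) (ord : seq 'I_n) (Rm : {set 'I_m})
    (A : {ffun 'I_n -> {set 'I_m}}) (c : nat)
    : ('I_n * nat) + ({ffun 'I_n -> {set 'I_m}} * {set 'I_m} * nat) :=
  match ord with
  | [::] => inr (A, Rm, c)
  | i :: ord' =>
      let k := uphalf (s i) in
      if (k <= v i Rm)%N then
        let Ai := pick i Rm k in
        pass s ord' (Rm :\: Ai) (finfun (fun j => if j == i then Ai else A j))
             (c + 1 + m + m)%N
      else inl (i, (c + 1)%N)
  end.

(* The outer repeat-loop, run with [fuel] repetitions at most; returns None
   if the fuel is exhausted before the algorithm returns. *)
Fixpoint loop (fuel : nat) (s : {ffun 'I_n -> nat}) (c : nat)
    : option ({ffun 'I_n -> {set 'I_m}} * {set 'I_m} * nat) :=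
  match fuel with
  | 0 => None
  | fuel'.+1 =>
      let c1 := (c + n + sort_cost n + m)%N in
      match pass s (order s) [set: 'I_m] [ffun => set0] c1 with
      | inl (i, c2) =>
          loop fuel' (finfun (fun j => if j == i then (s j).-1 else s j)) c2
      | inr (A, Rm, c2) => Some (A, Rm, (c2 + m)%N)
      end
  end.

(* Full run: initialization (cost n) then the loop.  The result is the
   bundles A_i, the leftover R (allocated arbitrarily, cost m charged), and
   the total cost. *)
Definition run (fuel : nat) := loop fuel s_init n.

End Algorithm.

(* Every repetition of the outer loop that does not terminate ends with an
   agent i whose target ceil(s_i/2) exceeds v_i(R); since v_i(R) >= 0 this
   forces s_i > 0, and then s_i is decremented.  Hence sum_i s_i, which is
   initially sum_i floor(b_i m) <= m, drops by one per failed repetition, so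
   there are at most m + 1 repetitions.  One repetition costs
   O(n log n) for sorting plus O(m) per agent, i.e. O(n (m + log n)). *)
From mathcomp Require Import all_boot all_order all_algebra.
From mathcomp Require Import zify.
Set Implicit Arguments. Unset Strict Implicit. Unset Printing Implicit Defensive.
Import Order.TTheory GRing.Theory Num.Theory.
Local Open Scope ring_scope.

Definition outcome_cost {I A : Type} (r : I * nat + A * nat) : nat :=
  match r with inl (_, c) | inr (_, c) => c end.

Definition agent_cost (m : nat) : nat := (1 + m + m)%N.

Definition repetition_cost (n m : nat) : nat :=
  (n + sort_cost n + m + n * agent_cost m)%N.

Lemma sum_ffun_pred (I : finType) (s : {ffun I -> nat}) (i : I) :
  (0 < s i)%N ->
  (\sum_j s j = (\sum_j [ffun j => if j == i then (s j).-1 else s j] j).+1)%N.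
Proof.
move=> s_i_gt0; rewrite (bigD1 i) //= [in RHS](bigD1 i) //= ffunE eqxx.
rewrite -addSn prednK //; congr (_ + _)%N.
by apply: eq_bigr => j /negbTE j_neq_i; rewrite ffunE j_neq_i.
Qed.

Section Pass.
Variables (n m : nat) (v : 'I_n -> {set 'I_m} -> nat).
Variable pick : 'I_n -> {set 'I_m} -> nat -> {set 'I_m}.

Lemma pass_fail_gt0 s ord Rm A c i c' :
  pass v pick s ord Rm A c = inl (i, c') -> (0 < s i)%N.
Proof.
elim: ord Rm A c => [|j ord IH] Rm A c //=.
case: ifP => [_|v_lt]; first exact: IH.
by case=> <- _; case: (s j) v_lt.
Qed.

Lemma pass_cost_le s ord Rm A c :
  (outcome_cost (pass v pick s ord Rm A c) <= c + size ord * agent_cost m)%N.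
Proof.
elim: ord Rm A c => [|j ord IH] Rm A c /=; first by rewrite addn0.
rewrite /agent_cost in IH *; case: ifP => _ /=; last lia.
by apply: leq_trans (IH _ _ _) _; lia.
Qed.

End Pass.

Section Loop.
Variables (R : archiRealFieldType) (n m : nat).
Variables (v : 'I_n -> {set 'I_m} -> nat) (b : 'I_n -> R).
Variable order : {ffun 'I_n -> nat} -> seq 'I_n.
Variable pick : 'I_n -> {set 'I_m} -> nat -> {set 'I_m}.
Hypothesis order_valid : valid_order b order.

Lemma size_order s : size (order s) = n.
Proof. by case: (order_valid s) => /perm_size -> _; rewrite size_enum_ord. Qed.

Lemma loop_terminates fuel (s : {ffun 'I_n -> nat}) c :
  (\sum_i s i < fuel)%N ->
  exists A Rm cost, loop v order pick fuel s c = Some (A, Rm, cost) /\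
    (cost <= c + (\sum_i s i).+1 * repetition_cost n m + m)%N.
Proof.
elim: fuel s c => [//|fuel IH] s c sum_lt_fuel; rewrite [loop _ _ _ _ _ _]/=.
set c1 := (c + n + sort_cost n + m)%N.
have pass_le := pass_cost_le v pick s (order s) [set: 'I_m] [ffun=> set0] c1.
rewrite size_order in pass_le.
have rep_le c2 : (c2 <= c1 + n * agent_cost m)%N -> (c2 <= c + repetition_cost n m)%N.
  by rewrite /c1 /repetition_cost; lia.
case E: pass pass_le => [[i c2]|[[A Rm] c2]] pass_le.
- have c2_le : (c2 <= c + repetition_cost n m)%N := rep_le _ pass_le.
  have sum_pred := sum_ffun_pred (pass_fail_gt0 E).
  rewrite sum_pred ltnS in sum_lt_fuel.
  have [A [Rm [cost [-> cost_le]]]] := IH _ c2 sum_lt_fuel.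
  rewrite -sum_pred in cost_le.
  exists A, Rm, cost; split => //; rewrite mulSn.
  apply: leq_trans cost_le _; apply: leq_add => //; rewrite addnA.
  exact: leq_add c2_le (leqnn _).
- have c2_le : (c2 <= c + repetition_cost n m)%N := rep_le _ pass_le.
  by exists A, Rm, (c2 + m)%N; split => //; rewrite mulSn; lia.
Qed.

Lemma sum_s_init_le : (forall i, 0 < b i) -> \sum_i b i = 1 ->
  (\sum_i s_init m b i <= m)%N.
Proof.
move=> b_gt0 b_sum1; rewrite -(ler_nat R) natr_sum.
apply: le_trans (_ : \sum_i b i * m%:R <= _); last by rewrite -mulr_suml b_sum1 mul1r.
apply: ler_sum => i _; rewrite ffunE natr_absz ger0_norm; first exact: floor_le.
by rewrite floor_ge0 mulr_ge0 // ltW.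
Qed.

End Loop.

Lemma ord_gt0_of_sum_eq1 (R : nzSemiRingType) n (b : 'I_n -> R) :
  \sum_(i < n) b i = 1 -> (0 < n)%N.
Proof. by case: n b => // b; rewrite big_ord0 => /esym/eqP; rewrite oner_eq0. Qed.

Lemma repetition_cost_le n m : (0 < n)%N -> (0 < m)%N ->
  (repetition_cost n m <= 6 * (n * (m + trunc_log 2 n)))%N.
Proof.
move=> n_gt0 m_gt0; rewrite /repetition_cost /agent_cost /sort_cost.
have n_le : (n <= n * m)%N by rewrite leq_pmulr.
have m_le : (m <= n * m)%N by rewrite leq_pmull.
rewrite mulnS !mulnDr muln1; lia.
Qed.

Lemma total_cost_le n m S : (0 < n)%N -> (0 < m)%N -> (S <= m)%N ->
  (n + S.+1 * repetition_cost n m + m <= 14 * (m * n * (m + trunc_log 2 n)))%N.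
Proof.
move=> n_gt0 m_gt0 S_le; set L := trunc_log 2 n.
have nm_le : (n + m <= 2 * (m * n * (m + L)))%N.
  have n_le : (n <= m * n)%N by rewrite leq_pmull.
  have m_le : (m <= m * n)%N by rewrite leq_pmulr.
  have mn_le : (m * n <= m * n * (m + L))%N by rewrite leq_pmulr // addn_gt0 m_gt0.
  lia.
have reps_le : (S.+1 * repetition_cost n m <= 12 * (m * n * (m + L)))%N.
  have S1_le : (S.+1 <= 2 * m)%N by lia.
  apply: leq_trans (leq_mul S1_le (repetition_cost_le n_gt0 m_gt0)) _.
  by rewrite mulnACA [(m * _)%N]mulnA.
move: reps_le nm_le; clear; lia.
Qed.

Theorem lemma2 :
  exists C : nat,
  forall (R : archiRealFieldType) (n m : nat)
         (v : 'I_n -> {set 'I_m} -> nat) (b : 'I_n -> R),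
    (0 < m)%N ->
    (forall i, binary_XOS R (v i)) ->
    (forall i, 0 < b i) ->
    \sum_(i < n) b i = 1 ->
  forall (order : {ffun 'I_n -> nat} -> seq 'I_n)
         (pick : 'I_n -> {set 'I_m} -> nat -> {set 'I_m}),
    valid_order b order ->
    valid_pick v pick ->
  exists (fuel : nat) (A : {ffun 'I_n -> {set 'I_m}}) (Rm : {set 'I_m}) (cost : nat),
    run v b order pick fuel = Some (A, Rm, cost) /\
    (cost <= C * (m * n * (m + trunc_log 2 n)))%N.
Proof.
exists 14%N => R n m v b m_gt0 _ b_gt0 b_sum1 order pick order_valid _.
have n_gt0 := ord_gt0_of_sum_eq1 b_sum1.
have S_le := sum_s_init_le m b_gt0 b_sum1.
have [A [Rm [cost [run_eq cost_le]]]] :=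
  loop_terminates v pick order_valid n (ltnSn (\sum_i s_init m b i)).
exists (\sum_i s_init m b i).+1, A, Rm, cost; split => //.
by apply: leq_trans cost_le (total_cost_le n_gt0 m_gt0 S_le).
Qed.
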